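(* Let $d\ge2$ and let $Q,Q'$ be qplexes. Then $Q$ and $Q'$ are isomorphic if and only if there is a type-preserving measurement for $Q$ whose stretched measurement matrix $R$ satisfies $Q'=RQ$.
   Context: Fix an integer $d\ge 2$. $\langle\cdot,\cdot\rangle$ is the standard inner product on $\mathbb{R}^{d^2}$, $\|\cdot\|$ the Euclidean norm. $\Delta=\{p\in\mathbb{R}^{d^2}: p(i)\ge0,\ \sum_ip(i)=1\}$; $H=\{u\in\mathbb{R}^{d^2}:\sum_i u(i)=1\}$; $c=(1/d^2,\dots,1/d^2)$. For $A\subseteq H$ the polar is $A^*=\{u\in H:\langle u,v\rangle\ge\frac{1}{d(d+1)}\ \forall v\in A\}$. Out-ball $B_{\rm o}=\{u\in H:\|u-c\|\le r_{\rm o}\}$, $r_{\rm o}^2=\frac{d-1}{d^2(d+1)}$. A qplex is a set $Q\subseteq\Delta\cap B_{\rm o}$ with $Q^*=Q$. Two qplexes $Q,Q'$ are isomorphic if there is a linear bijection $f:\mathbb{R}^{d^2}\to\mathbb{R}^{d^2}$ with $f(Q)=Q'$ and $\langle f(q_1),f(q_2)\rangle=\langle q_1,q_2\rangle$ for all $q_1,q_2\in Q$. A measurement (with $d^2$ outcomes) is an array of reals $r(i|j)\ge0$ with $\sum_i r(i|j)=1$ for every $j$. For $q\in Q$, $q_r(i)=\sum_j\big[(d+1)q(j)-\frac1d\big]r(i|j)$ and $Q_r=\{q_r:q\in Q\}$; the measurement is type-preserving for $Q$ if $Q_r$ is a qplex. Its stretched measurement matrix is $R_{ij}=(d+1)r(i|j)-\frac1d\sum_k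 r(i|k)$, so that $q_r=Rq$. *)

(* Scalars: an arbitrary real closed field R (the paper uses the reals). *)
From HB Require Import structures.
From mathcomp Require Import all_boot all_order all_algebra.
Set Implicit Arguments. Unset Strict Implicit. Unset Printing Implicit Defensive.
Import Order.TTheory GRing.Theory Num.Theory.
Local Open Scope ring_scope.

Section Qplex.
Variables (R : rcfType) (d : nat).

Definition vec := 'cV[R]_(d ^ 2).
Definition vset := vec -> Prop.

Definition dot (u v : vec) : R := \sum_(i < d ^ 2) u i 0 * v i 0.

Definition inH (u : vec) : Prop := \sum_(i < d ^ 2) u i 0 = 1.

Definition inDelta (p : vec) : Prop :=
  (forall i, 0 <= p i 0) /\ \sum_(i < d ^ 2) p i 0 = 1.

Definition cvec : vec := const_mx (1 / (d ^ 2)%:R).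

Definition ro2 : R := (d%:R - 1) / ((d ^ 2)%:R * (d%:R + 1)).

Definition inBo (u : vec) : Prop := inH u /\ dot (u - cvec) (u - cvec) <= ro2.

Definition polar (A : vset) : vset :=
  fun u => inH u /\ forall v, A v -> 1 / (d%:R * (d%:R + 1)) <= dot u v.

Definition qplex (Q : vset) : Prop :=
  (forall q, Q q -> inDelta q /\ inBo q) /\ (forall u, polar Q u <-> Q u).

Definition qimage (f : vec -> vec) (A : vset) : vset :=
  fun y => exists x, A x /\ f x = y.

Definition set_eq (A B : vset) : Prop := forall u, A u <-> B u.

Definition isomorphic (Q Q' : vset) : Prop :=
  exists f : vec -> vec,
    linear f /\ bijective f /\ set_eq (qimage f Q) Q' /\
    (forall q1 q2, Q q1 -> Q q2 -> dot (f q1) (f q2) = dot q1 q2).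

(* a measurement with d^2 outcomes: r i j = r(i|j) *)
Definition measurement (r : 'M[R]_(d ^ 2)) : Prop :=
  (forall i j, 0 <= r i j) /\ (forall j, \sum_(i < d ^ 2) r i j = 1).

Definition meas_apply (r : 'M[R]_(d ^ 2)) (q : vec) : vec :=
  \col_i \sum_(j < d ^ 2) ((d%:R + 1) * q j 0 - 1 / d%:R) * r i j.

Definition type_preserving (Q : vset) (r : 'M[R]_(d ^ 2)) : Prop :=
  qplex (qimage (meas_apply r) Q).

Definition stretched (r : 'M[R]_(d ^ 2)) : 'M[R]_(d ^ 2) :=
  \matrix_(i, j) ((d%:R + 1) * r i j - 1 / d%:R * \sum_(k < d ^ 2) r i k).

End Qplex.

From Stdlib Require Import IndefiniteDescription.
From HB Require Import structures.
From mathcomp Require Import all_boot all_order all_algebra.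
From mathcomp Require Import ring.
Import Order.TTheory GRing.Theory Num.Theory.
Local Open Scope ring_scope.
Set Implicit Arguments. Unset Strict Implicit. Unset Printing Implicit Defensive.

(* On vectors of unit sum the stretched matrix of [r] is [r] composed with the
   stretch [q |-> (d + 1) q - 1/d], whose inverse [B] has columns lying in every
   qplex.  A linear isomorphism [f] is therefore multiplication by the stretched
   matrix of the measurement [r = f B], whose columns [f (B e_j)] lie in
   [Q'], a subset of the simplex.  Conversely, if [Q' = R Q], let [T] be the
   stretch of [r] and [U] the stretch of a matrix whose columns are preimages
   in [Q] of the columns of [B]; then [T U = 1].  The stretch maps a qplex into
   the unit ball, so [T] and [U] have squared Frobenius norm at most [d^2];
   this forces [U = T^T], so [T] is orthogonal, and since [1^T R = 1^T],
   [R] itself is orthogonal. *)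

Section LinearMatrix.
Variables (R : comNzRingType) (m n : nat).

Definition mx_of_lin (f : 'cV[R]_n -> 'cV[R]_m) : 'M[R]_(m, n) :=
  \matrix_(i, j) f (delta_mx j 0) i 0.

Lemma mx_of_linE (f : 'cV[R]_n -> 'cV[R]_m) (w : 'cV[R]_n) :
  linear f -> f w = mx_of_lin f *m w.
Proof.
move=> flin.
pose fL : {linear 'cV[R]_n -> 'cV[R]_m} :=
  HB.pack f (GRing.isLinear.Build _ _ _ _ f flin).
rewrite -[f w]/(fL w) [in LHS](matrix_sum_delta w) linear_sum.
apply/colP => i; rewrite !mxE summxE; apply: eq_bigr => j _.
by rewrite big_ord1 linearZ !mxE mulrC.
Qed.

Lemma col_mulmx p (A : 'M[R]_(m, n)) (B : 'M[R]_(n, p)) (j : 'I_p) :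
  col j (A *m B) = A *m col j B.
Proof. by rewrite !colE mulmxA. Qed.

Lemma mul_const1_mx :
  (const_mx 1 : 'M[R]_n) *m const_mx 1 = n%:R *: (const_mx 1 : 'M[R]_n).
Proof.
apply/matrixP => i j; rewrite !mxE (eq_bigr (fun _ => 1)) ?sumr_const ?card_ord ?mulr1 //.
by move=> k _; rewrite !mxE mulr1.
Qed.

Lemma col_choice (P : 'I_n -> 'cV[R]_m -> Prop) :
  (forall j, exists v, P j v) -> exists M : 'M[R]_(m, n), forall j, P j (col j M).
Proof.
move=> /functional_choice [v Pv]; exists (\matrix_(i, j) v j i 0) => j.
by congr (P j _): (Pv j); apply/colP => i; rewrite !mxE.
Qed.

End LinearMatrix.

Section Frobenius.
Variable R : realDomainType.

Definition frob2 m n (A : 'M[R]_(m, n)) : R := \sum_i \sum_j A i j ^+ 2.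

Lemma frob2_ge0 m n (A : 'M[R]_(m, n)) : 0 <= frob2 A.
Proof. by apply: sumr_ge0 => i _; apply: sumr_ge0 => j _; apply: sqr_ge0. Qed.

Lemma frob2_eq0 m n (A : 'M[R]_(m, n)) : frob2 A = 0 -> A = 0.
Proof.
move/eqP; rewrite psumr_eq0 => [/allP A0|i _]; last first.
  by apply: sumr_ge0 => j _; apply: sqr_ge0.
apply/matrixP => i j; move: (A0 i (mem_index_enum _)); rewrite implyTb.
rewrite psumr_eq0 => [/allP/(_ j (mem_index_enum _))|k _]; last exact: sqr_ge0.
by rewrite implyTb sqrf_eq0 mxE => /eqP.
Qed.

Lemma frob2_sub_trmx n (T U : 'M[R]_n) :
  frob2 (T - U^T) = frob2 T + frob2 U - 2 * \tr (T *m U).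
Proof.
have -> : frob2 U = \sum_i \sum_j U j i ^+ 2 by rewrite /frob2 exchange_big.
rewrite /frob2 mulr_sumr -big_split /= -sumrB.
apply: eq_bigr => i _; rewrite !mxE mulr_sumr -big_split /= -sumrB.
by apply: eq_bigr => j _; rewrite !mxE; ring.
Qed.

(* [T U = 1] gives [frob2 (T - U^T) = frob2 T + frob2 U - 2 n <= 0]. *)
Lemma frob2_le_inverse_orthogonal n (T U : 'M[R]_n) :
  T *m U = 1%:M -> frob2 T <= n%:R -> frob2 U <= n%:R -> T^T *m T = 1%:M.
Proof.
move=> TU1 hT hU.
have /frob2_eq0/eqP : frob2 (T - U^T) = 0.
  apply/eqP; rewrite eq_le frob2_ge0 andbT frob2_sub_trmx TU1 mxtrace1.
  by rewrite subr_le0 mulr2n mulrDl mul1r lerD.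
rewrite subr_eq0 => /eqP TE; rewrite TE trmxK; apply: mulmx1C.
by rewrite -TE.
Qed.

End Frobenius.

Lemma sum_affine_sqr (R : comPzRingType) n (x : 'I_n -> R) (a b : R) :
  \sum_i (a * x i + b) * (a * x i + b) =
  a ^+ 2 * \sum_i x i * x i + 2 * a * b * \sum_i x i + n%:R * b ^+ 2.
Proof.
rewrite (eq_bigr (fun i => a ^+ 2 * (x i * x i) + 2 * a * b * x i + b ^+ 2));
  last by move=> i _; ring.
by rewrite !big_split /= -!mulr_sumr sumr_const card_ord -mulr_natl; ring.
Qed.

Section Qplex.
Variables (R : rcfType) (d : nat).
Hypothesis d_ge2 : (2 <= d)%N.

Local Notation n := (d ^ 2)%N.
Local Notation J := (const_mx 1 : 'M[R]_n).

(* On [inH], [stretch_mx] acts as [q |-> (d + 1) q - 1/d]; [basis_mx] is its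
   inverse. *)
Definition basis_mx : 'M[R]_n := (d%:R * (d%:R + 1))^-1 *: (d%:R *: 1%:M + J).
Definition stretch_mx : 'M[R]_n := (d%:R + 1) *: 1%:M - d%:R^-1 *: J.

Lemma natr_d_neq0 : d%:R != 0 :> R.
Proof. by rewrite pnatr_eq0 -lt0n (leq_trans _ d_ge2). Qed.

Lemma natr_d1_neq0 : d%:R + 1 != 0 :> R.
Proof. by rewrite natr1 pnatr_eq0. Qed.

Lemma const1_mx_sqr : J *m J = d%:R ^+ 2 *: J.
Proof. by rewrite mul_const1_mx natrX. Qed.

Lemma basis_stretchK : basis_mx *m stretch_mx = 1%:M.
Proof.
have h1 := natr_d_neq0; have h2 := natr_d1_neq0.
rewrite /basis_mx /stretch_mx -scalemxAl mulmxDl !mulmxBr -!scalemxAl -!scalemxAr.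
rewrite !mul1mx !mulmx1 const1_mx_sqr; apply/matrixP => i j; rewrite !mxE.
by case: (i == j) => /=; field; rewrite h1 h2.
Qed.

Lemma stretch_basisK : stretch_mx *m basis_mx = 1%:M.
Proof. exact: mulmx1C basis_stretchK. Qed.

Lemma stretch_mx_sqr : stretch_mx *m stretch_mx =
  (d%:R + 1) ^+ 2 *: 1%:M - ((d%:R + 2) / d%:R) *: J.
Proof.
have h1 := natr_d_neq0.
rewrite /stretch_mx mulmxBl !mulmxBr -!scalemxAl -!scalemxAr !mul1mx !mulmx1.
rewrite const1_mx_sqr; apply/matrixP => i j; rewrite !mxE.
by case: (i == j) => /=; field; rewrite h1.
Qed.

Lemma trmx_basis : basis_mx^T = basis_mx.
Proof. by apply/matrixP => i j; rewrite !mxE eq_sym. Qed.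

Lemma trmx_stretch : stretch_mx^T = stretch_mx.
Proof. by apply/matrixP => i j; rewrite !mxE eq_sym. Qed.

Lemma stretchedE (r : 'M[R]_n) : stretched r = r *m stretch_mx.
Proof.
rewrite /stretch_mx mulmxBr -!scalemxAr mulmx1; apply/matrixP => i j; rewrite !mxE.
by rewrite div1r; congr (_ - _ * _); apply: eq_bigr => k _; rewrite mxE mulr1.
Qed.

Lemma meas_applyE (r : 'M[R]_n) (q : vec R d) :
  inH q -> meas_apply r q = stretched r *m q.
Proof.
move=> q1; rewrite stretchedE -mulmxA /stretch_mx mulmxBl -!scalemxAl mul1mx.
apply/colP => i; rewrite !mxE; apply: eq_bigr => j _; rewrite mulrC !mxE.
congr (_ * (_ - _)); under eq_bigr do rewrite mxE mul1r.
by rewrite q1 div1r mulr1.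
Qed.

Lemma const1_stretched (r : 'M[R]_n) :
  (forall j, \sum_i r i j = 1) -> J *m stretched r = J.
Proof.
move=> r1; have h1 := natr_d_neq0.
have Jr : J *m r = J.
  apply/matrixP => i j; rewrite !mxE -[RHS](r1 j).
  by under eq_bigr do rewrite mxE mul1r.
rewrite stretchedE mulmxA Jr /stretch_mx mulmxBr -!scalemxAr mulmx1 const1_mx_sqr.
by apply/matrixP => i j; rewrite !mxE; field; rewrite h1.
Qed.

Lemma dotE (u v : vec R d) : dot u v = (u^T *m v) 0 0.
Proof. by rewrite /dot mxE; apply: eq_bigr => i _; rewrite mxE. Qed.

Lemma dot_orthogonal (S : 'M[R]_n) (u v : vec R d) :
  S^T *m S = 1%:M -> dot (S *m u) (S *m v) = dot u v.
Proof. by move=> SS1; rewrite !dotE trmx_mul mulmxA -(mulmxA _ S^T) SS1 mulmx1. Qed.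

Lemma dot_basis_col (j : 'I_n) (v : vec R d) :
  dot (col j basis_mx) v = (d%:R * (d%:R + 1))^-1 * (d%:R * v j 0 + \sum_i v i 0).
Proof.
rewrite /dot /basis_mx; under eq_bigr do rewrite !mxE -mulrA.
rewrite -mulr_sumr; congr (_ * _).
under eq_bigr do rewrite mulrDl mul1r; rewrite big_split /=; congr (_ + _).
rewrite (bigD1 j) //= big1 ?addr0; first by rewrite eqxx mulr1.
by move=> i /negbTE ->; rewrite mulr0 mul0r.
Qed.

Lemma polar_basis_col (A : vset R d) (j : 'I_n) :
  (forall v, A v -> inDelta v) -> polar A (col j basis_mx).
Proof.
move=> ADelta; have h1 := natr_d_neq0; have h2 := natr_d1_neq0; split.
  rewrite /inH; have := dot_basis_col j (const_mx 1); rewrite /dot.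
  under eq_bigr do rewrite [const_mx 1 _ _]mxE mulr1.
  move=> ->; rewrite mxE; under eq_bigr do rewrite mxE.
  by rewrite sumr_const card_ord natrX; field; rewrite h1 h2.
move=> v /ADelta [v_ge0 v1]; rewrite dot_basis_col v1.
rewrite (_ : _ * _ = 1 / (d%:R * (d%:R + 1)) + v j 0 / (d%:R + 1)); last first.
  by field; rewrite h1 h2.
by rewrite lerDl divr_ge0 // addr_ge0.
Qed.

Lemma qplex_basis_col (Q : vset R d) (j : 'I_n) : qplex Q -> Q (col j basis_mx).
Proof.
by move=> [QDB QQ]; apply/QQ/polar_basis_col => v /QDB[].
Qed.

Lemma stretch_dot_le1 (q : vec R d) :
  inBo q -> dot (stretch_mx *m q) (stretch_mx *m q) <= 1.
Proof.
move=> [q1 q_ro]; have h1 := natr_d_neq0; have h2 := natr_d1_neq0.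
have dist_sqr : dot (q - cvec R d) (q - cvec R d) =
    1 ^+ 2 * \sum_i q i 0 * q i 0 + 2 * 1 * (- (1 / (d ^ 2)%:R)) * \sum_i q i 0
    + (d ^ 2)%:R * (- (1 / (d ^ 2)%:R)) ^+ 2.
  by rewrite -sum_affine_sqr; apply: eq_bigr => i _; rewrite !mxE !mul1r.
have stretch_sqr : dot (stretch_mx *m q) (stretch_mx *m q) =
    (d%:R + 1) ^+ 2 * \sum_i q i 0 * q i 0 + 2 * (d%:R + 1) * (- d%:R^-1) * \sum_i q i 0
    + (d ^ 2)%:R * (- d%:R^-1) ^+ 2.
  rewrite -sum_affine_sqr; apply: eq_bigr => k _.
  rewrite /stretch_mx mulmxBl -!scalemxAl mul1mx !mxE.
  by under eq_bigr do rewrite !mxE mul1r; rewrite q1 mulr1.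
rewrite dist_sqr q1 /ro2 in q_ro; rewrite stretch_sqr q1.
move: q_ro; set s := \sum_i _; rewrite natrX => q_ro.
have s_le : s <= 2 / (d%:R * (d%:R + 1)).
  rewrite (_ : 2 / _ = (d%:R - 1) / (d%:R ^+ 2 * (d%:R + 1)) + 1 / d%:R ^+ 2); last first.
    by field; rewrite h1 h2.
  rewrite -lerBlDr; apply: le_trans q_ro; rewrite le_eqVlt; apply/orP; left; apply/eqP.
  by field; rewrite h1.
rewrite (_ : _ + _ = 1 + (d%:R + 1) ^+ 2 * (s - 2 / (d%:R * (d%:R + 1)))); last first.
  by field; rewrite h1 h2.
by rewrite gerDl pmulr_rle0 ?subr_le0 // exprn_gt0 // natr1 ltr0n.
Qed.

Lemma frob2_stretch_le (Q : vset R d) (X : 'M[R]_n) :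
  qplex Q -> (forall j, Q (col j X)) -> frob2 (stretch_mx *m X) <= n%:R.
Proof.
move=> [QDB _] QX; rewrite /frob2 exchange_big -[n in n%:R]card_ord -sumr_const /=.
apply: ler_sum => j _.
rewrite (_ : \sum_i _ = dot (stretch_mx *m col j X) (stretch_mx *m col j X)).
  exact: stretch_dot_le1 (QDB _ (QX j)).2.
by rewrite -col_mulmx; apply: eq_bigr => i _; rewrite !mxE expr2.
Qed.

Lemma stretch_conj_orthogonal (S : 'M[R]_n) :
  J *m S = J ->
  (stretch_mx *m S *m basis_mx)^T *m (stretch_mx *m S *m basis_mx) = 1%:M ->
  S^T *m S = 1%:M.
Proof.
move=> JS T1; have h2 := natr_d1_neq0.
have StJ : S^T *m J = J by rewrite -{1}trmx_const -trmx_mul JS trmx_const.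
have : S^T *m (stretch_mx *m stretch_mx) *m S = stretch_mx *m stretch_mx.
  have := congr1 (fun M => stretch_mx *m M *m stretch_mx) T1.
  rewrite !trmx_mul trmx_basis trmx_stretch /= mulmx1 !mulmxA stretch_basisK mul1mx.
  by rewrite -!mulmxA basis_stretchK mulmx1.
rewrite stretch_mx_sqr mulmxBr mulmxBl -!scalemxAr -!scalemxAl mulmx1 StJ JS.
by move=> /addIr /scalerI; apply; rewrite expf_neq0.
Qed.

Lemma qplex_set_eq (A B : vset R d) : set_eq A B -> qplex A -> qplex B.
Proof.
move=> AB [ADB AA]; split=> [q /AB/ADB //|u].
split=> [[u1 uB]|/AB/AA [u1 uA]]; first by apply/AB/AA; split=> // v /AB/uB.
by split=> // v /AB/uA.
Qed.

Lemma qimage_eq_in (f g : vec R d -> vec R d) (A : vset R d) :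
  (forall x, A x -> f x = g x) -> set_eq (qimage f A) (qimage g A).
Proof.
by move=> fg u; split=> -[x [Ax <-]]; exists x; rewrite fg.
Qed.

Lemma measurement_cols (r : 'M[R]_n) : (forall j, inDelta (col j r)) -> measurement r.
Proof.
move=> rD; split=> [i j|j]; have [r_ge0 r1] := rD j.
  by have := r_ge0 i; rewrite mxE.
by rewrite -r1; apply: eq_bigr => i _; rewrite mxE.
Qed.

Lemma isomorphic_stretched (Q Q' : vset R d) :
  qplex Q -> qplex Q' -> isomorphic Q Q' ->
  exists r : 'M[R]_n, measurement r /\ type_preserving Q r /\
    set_eq Q' (qimage (fun q => stretched r *m q) Q).
Proof.
move=> QQ QQ' [f [flin [_ [fQ _]]]].
pose r := mx_of_lin f *m basis_mx.
have fE q : f q = stretched r *m q.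
  by rewrite stretchedE /r -(mulmxA _ basis_mx) basis_stretchK mulmx1 mx_of_linE.
have Q'E : set_eq Q' (qimage (fun q => stretched r *m q) Q).
  by move=> u; rewrite -(fQ u); apply: qimage_eq_in => q _; apply: fE.
exists r; split.
  apply: measurement_cols => j; apply: (QQ'.1 _ _).1.
  by rewrite col_mulmx -mx_of_linE //; apply/fQ; exists (col j basis_mx);
    split => //; apply: qplex_basis_col.
split=> //; apply: qplex_set_eq QQ' => u; rewrite Q'E.
by apply: qimage_eq_in => q /QQ.1 [[_ q1] _]; rewrite meas_applyE.
Qed.

Lemma stretched_orthogonal (Q Q' : vset R d) (r : 'M[R]_n) :
  qplex Q -> qplex Q' -> measurement r ->
  set_eq Q' (qimage (fun q => stretched r *m q) Q) ->
  (stretched r)^T *m stretched r = 1%:M.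
Proof.
move=> QQ QQ' [_ r1] Q'E; set S := stretched r.
have SB : S *m basis_mx = r by rewrite /S stretchedE -mulmxA stretch_basisK mulmx1.
have Q'r j : Q' (col j r).
  apply/Q'E; exists (col j basis_mx); rewrite -col_mulmx SB.
  by split => //; apply: qplex_basis_col.
have [P PQ] : exists P : 'M[R]_n,
    forall j, Q (col j P) /\ S *m col j P = col j basis_mx.
  apply: (col_choice (P := fun j v => Q v /\ S *m v = col j basis_mx)) => j.
  by have /Q'E [p [Qp Sp]] := qplex_basis_col j QQ'; exists p.
have SP : S *m P = basis_mx.
  apply/matrixP => i j; have := congr1 (fun v : vec R d => v i 0) (PQ j).2.
  by rewrite /= -col_mulmx !mxE.
have TU : (stretch_mx *m r) *m (stretch_mx *m P) = 1%:M.
  rewrite -SB -!mulmxA (mulmxA basis_mx) basis_stretchK mul1mx.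
  by rewrite SP stretch_basisK.
apply: stretch_conj_orthogonal; first exact: const1_stretched r1.
rewrite -mulmxA SB; apply: frob2_le_inverse_orthogonal TU _ _.
  exact: frob2_stretch_le QQ' Q'r.
by apply: frob2_stretch_le QQ _ => j; case: (PQ j).
Qed.

Lemma orthogonal_isomorphic (Q Q' : vset R d) (S : 'M[R]_n) :
  S^T *m S = 1%:M -> set_eq Q' (qimage (fun q => S *m q) Q) -> isomorphic Q Q'.
Proof.
move=> SS1 Q'E; exists (mulmx S).
split; first by move=> a u v; rewrite mulmxDr scalemxAr.
split; first by exists (mulmx S^T) => u; rewrite mulmxA ?SS1 ?(mulmx1C SS1) mul1mx.
split; first by move=> u; split => /Q'E.
by move=> q1 q2 _ _; apply: dot_orthogonal.
Qed.

End Qplex.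

Theorem mainTheorem12 (R : rcfType) (d : nat) (hd : (2 <= d)%N)
  (Q Q' : vset R d) :
  qplex Q -> qplex Q' ->
  (isomorphic Q Q' <->
   exists r : 'M[R]_(d ^ 2),
     measurement r /\ type_preserving Q r /\
     set_eq Q' (qimage (fun q : vec R d => stretched r *m q) Q)).
Proof.
move=> QQ QQ'; split; first exact: isomorphic_stretched.
case=> r [meas_r [_ Q'E]].
exact: orthogonal_isomorphic (stretched_orthogonal hd QQ QQ' meas_r Q'E) Q'E.
Qed.
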